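(* Let $0<\lambda<1$ and $0 < c < \frac{2}{1-\lambda}$. If the improper integral $$\int_1^\infty \frac{W(t) - \exp(c t^{1-\lambda})}{t^\lambda \exp(c t^{1-\lambda})}\,dt$$ converges, then $W(x) \sim \exp(c x^{1-\lambda})$.
   Context: Fix $0<\lambda<1$ and $c>0$. For $x>0$ define $w(x) = \frac{c(1-\lambda)\log(x)\exp(c x^{1-\lambda})}{x^\lambda}$ and $W(x) = \sum_{p \le x} w(p)$, the sum over primes $p\le x$. $f\sim g$ means $f(x)/g(x)\to1$ as $x\to\infty$. *)

From Stdlib Require Import Reals ZArith Znumtheory.
From Coquelicot Require Import Coquelicot.
Open Scope R_scope.

Definition w (lam c x : R) : R :=
  c * (1 - lam) * ln x * exp (c * Rpower x (1 - lam)) / Rpower x lam.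

Definition wprime (lam c : R) (n : nat) : R :=
  if prime_dec (Z.of_nat n) then w lam c (INR n) else 0.

(* W(x) = sum_{p <= x, p prime} w(p); the primes p <= x are those p <= floor x *)
Definition W (lam c x : R) : R :=
  sum_n (wprime lam c) (Z.to_nat (Int_part x)).

(* Write E(t) = exp(c t^(1-lam)).  The hypothesis is that
   int_1^oo (W(t) - E(t)) / (t^lam E(t)) dt converges; the Tauberian input is
   that W is nondecreasing.  Replacing W(t) by a constant K, the integrand has the
   explicit primitive -K/(c(1-lam)) / E(t) - t^(1-lam)/(1-lam).  For r > 0 let
   s = shift r x be the point with E(s) = r E(x).  If W(x) >= r E(x) with r > 1,
   monotonicity gives W >= r E(x) on [x, s], so the integral over [x, s] is at
   least gap r = (r - 1 - ln r)/(c(1-lam)) > 0, contradicting the Cauchy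
   criterion for large x; symmetrically W(x) <= r E(x) with r < 1 forces the
   integral over [s, x] below - gap r.  Hence for every e in (0,1),
   (1-e) E(x) < W(x) < (1+e) E(x) eventually, and W/E -> 1. *)
From Stdlib Require Import Reals Lra Lia ZArith Znumtheory.
From Coquelicot Require Import Coquelicot.
Open Scope R_scope.

Lemma ex_RInt_gen_tail_small (f : R -> R) (a0 : R) :
  ex_RInt_gen f (at_point a0) (Rbar_locally p_infty) ->
  forall d, 0 < d -> exists M, forall a b, M < a -> M < b ->
    exists I, is_RInt f a b I /\ Rabs I < d.
Proof.
  intros [l Hl] d hd.
  assert (hd2 : 0 < d / 2) by lra.
  destruct (Hl (fun y => Rabs (y - l) < d / 2)) as [Q P HQ [M HM] HP].
  { exists (mkposreal _ hd2). intros y Hy. exact Hy. }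
  exists M. intros a b ha hb.
  destruct (HP a0 a HQ (HM a ha)) as [ya [Ha Ea]].
  destruct (HP a0 b HQ (HM b hb)) as [yb [Hb Eb]].
  exists (plus (opp ya) yb). split.
  - apply is_RInt_swap in Ha.
    exact (is_RInt_Chasles _ _ _ _ _ _ Ha Hb).
  - unfold plus, opp; simpl in Ea, Eb |- *.
    apply Rabs_def2 in Ea. apply Rabs_def2 in Eb. apply Rabs_def1; lra.
Qed.

Lemma is_lim_ratio_1 (f g : R -> R) :
  (forall x, 0 < g x) ->
  (forall e, 0 < e < 1 -> Rbar_locally p_infty
     (fun x => (1 - e) * g x < f x < (1 + e) * g x)) ->
  is_lim (fun x => f x / g x) p_infty 1.
Proof.
  intros hg Hbounds. apply is_lim_spec. intros eps.
  set (e := Rmin (eps / 2) (1 / 2)).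
  assert (he : 0 < e < 1 /\ e < eps).
  { assert (H := cond_pos eps). unfold e, Rmin; destruct Rle_dec; lra. }
  destruct (Hbounds e (proj1 he)) as [M HM].
  exists M. intros x hx. specialize (HM x hx). specialize (hg x).
  replace (f x / g x - 1) with ((f x - g x) / g x) by (field; lra).
  rewrite Rabs_div by lra. rewrite (Rabs_pos_eq (g x)) by lra.
  apply Rlt_div_l; [lra|]. apply Rabs_def1; nra.
Qed.

Lemma sum_n_nondecreasing (a : nat -> R) :
  (forall n, 0 <= a n) -> forall n m, (n <= m)%nat -> sum_n a n <= sum_n a m.
Proof.
  intros Ha n m H. induction H as [|m _ IH]; [lra|].
  rewrite sum_Sn. unfold plus; simpl. specialize (Ha (S m)). lra.
Qed.

Lemma Int_part_le x y : x <= y -> (Int_part x <= Int_part y)%Z.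
Proof.
  intros hxy. destruct (base_Int_part x) as [hx _].
  destruct (base_Int_part y) as [_ hy].
  assert (H : IZR (Int_part x) < IZR (Int_part y + 1))
    by (rewrite plus_IZR; simpl; lra).
  apply lt_IZR in H. lia.
Qed.

Lemma Rpower_lt_reg a b p : 0 < a -> 0 < b -> 0 < p ->
  Rpower a p < Rpower b p -> a < b.
Proof.
  intros ha hb hp h. destruct (Rlt_or_le a b) as [|hba]; [assumption|].
  assert (Rpower b p <= Rpower a p) by (apply Rle_Rpower_l; lra). lra.
Qed.

Lemma Rpower_inv_pow v p : 0 < v -> 0 < p -> Rpower (Rpower v (/ p)) p = v.
Proof. intros hv hp. rewrite Rpower_mult, Rinv_l by lra. now apply Rpower_1. Qed.

Section Tauberian.

Variables lam c : R.
Hypothesis lam_bounds : 0 < lam < 1.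
Hypothesis c_pos : 0 < c.

Lemma wprime_nonneg n : 0 <= wprime lam c n.
Proof.
  unfold wprime. destruct prime_dec as [hp|]; [|lra].
  apply prime_ge_2 in hp.
  assert (h2 : 2 <= INR n) by (replace 2 with (INR 2) by (simpl; ring); apply le_INR; lia).
  assert (hln : 0 < ln (INR n)) by (rewrite <- ln_1; apply ln_increasing; lra).
  unfold w, Rpower, Rdiv.
  apply Rmult_le_pos; [|left; apply Rinv_0_lt_compat, exp_pos].
  apply Rmult_le_pos; [|left; apply exp_pos].
  apply Rmult_le_pos; [apply Rmult_le_pos|]; lra.
Qed.

Lemma W_nondecreasing x y : x <= y -> W lam c x <= W lam c y.
Proof.
  intros hxy. unfold W. apply sum_n_nondecreasing; [exact wprime_nonneg|].
  apply Int_part_le in hxy. lia.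
Qed.

Definition E t := exp (c * Rpower t (1 - lam)).

(* The integrand of the hypothesis with W replaced by a constant K, and an
   explicit primitive of it: d/dt (1/E) = -c(1-lam) t^(-lam) / E and
   d/dt t^(1-lam) = (1-lam) t^(-lam). *)
Definition const_integrand K t := (K - E t) / (Rpower t lam * E t).
Definition const_primitive K t :=
  - K / (c * (1 - lam)) / E t - Rpower t (1 - lam) / (1 - lam).

Lemma const_primitive_derive K t :
  0 < t -> is_derive (const_primitive K) t (const_integrand K t).
Proof.
  intros ht. unfold const_primitive, const_integrand, E, Rpower.
  auto_derive.
  - repeat split; [lra|apply Rgt_not_eq, exp_pos|lra].
  - assert (hlam := exp_pos (lam * ln t)).
    assert (hE := exp_pos (c * exp ((1 - lam) * ln t))).
    assert (hsplit : exp ((1 - lam) * ln t) = t / exp (lam * ln t)).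
    { replace ((1 - lam) * ln t) with (ln t + - (lam * ln t)) by ring.
      rewrite exp_plus, exp_Ropp, exp_ln by lra. reflexivity. }
    set (Et := exp (c * exp ((1 - lam) * ln t))) in *.
    rewrite hsplit. field. repeat split; lra.
Qed.

Lemma const_integrand_continuous K t : 0 < t -> continuous (const_integrand K) t.
Proof.
  intros ht. apply (ex_derive_continuous (K := R_AbsRing) (V := R_NormedModule)).
  unfold const_integrand, E, Rpower. auto_derive.
  assert (hlam := exp_pos (lam * ln t)).
  assert (hE := exp_pos (c * exp ((1 - lam) * ln t))).
  repeat split; nra.
Qed.

Lemma is_RInt_const_integrand K a b : 0 < a -> 0 < b ->
  is_RInt (const_integrand K) a b (const_primitive K b - const_primitive K a).
Proof.
  intros ha hb.
  apply (is_RInt_derive (V := R_CompleteNormedModule)); intros t ht;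
    (assert (0 < t) by (destruct ht; unfold Rmin in *; destruct Rle_dec; lra)).
  - now apply const_primitive_derive.
  - now apply const_integrand_continuous.
Qed.

(* The integrand of the hypothesis is const_integrand evaluated at K = W(t),
   and const_integrand is nondecreasing in K. *)
Lemma const_integrand_le K1 K2 t : K1 <= K2 ->
  const_integrand K1 t <= const_integrand K2 t.
Proof.
  intros hK. unfold const_integrand, Rdiv. apply Rmult_le_compat_r; [|lra].
  left. apply Rinv_0_lt_compat, Rmult_lt_0_compat; apply exp_pos.
Qed.

(* shift r x is the point s with c s^(1-lam) = c x^(1-lam) + ln r, i.e.
   E(s) = r E(x); it lies to the right of x when r > 1, to the left when r < 1. *)
Definition shift r x := Rpower (Rpower x (1 - lam) + ln r / c) (/ (1 - lam)).

Lemma Rpower_shift r x : 0 < Rpower x (1 - lam) + ln r / c ->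
  Rpower (shift r x) (1 - lam) = Rpower x (1 - lam) + ln r / c.
Proof. intros h. apply Rpower_inv_pow; lra. Qed.

Lemma E_shift r x : 0 < r -> 0 < Rpower x (1 - lam) + ln r / c ->
  E (shift r x) = r * E x.
Proof.
  intros hr h. unfold E. rewrite Rpower_shift by exact h.
  replace (c * (Rpower x (1 - lam) + ln r / c))
    with (ln r + c * Rpower x (1 - lam)) by (field; lra).
  rewrite exp_plus, exp_ln by exact hr. reflexivity.
Qed.

(* The integral of const_integrand (r E(x)) from x to shift r x does not depend
   on x: it is the gap (r - 1 - ln r) / (c (1-lam)), which is positive for r <> 1. *)
Definition gap r := (r - 1 - ln r) / (c * (1 - lam)).

Lemma gap_pos r : 0 < r -> r <> 1 -> 0 < gap r.
Proof.
  intros hr hr1. unfold gap. apply Rdiv_lt_0_compat; [|apply Rmult_lt_0_compat; lra].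
  assert (h := exp_ineq1 (r - 1) ltac:(lra)).
  apply ln_increasing in h; [|lra]. rewrite ln_exp in h.
  replace (1 + (r - 1)) with r in h by ring. lra.
Qed.

Lemma is_RInt_shift r x : 0 < r -> 0 < x -> 0 < Rpower x (1 - lam) + ln r / c ->
  is_RInt (const_integrand (r * E x)) x (shift r x) (gap r).
Proof.
  intros hr hx h.
  replace (gap r) with
    (const_primitive (r * E x) (shift r x) - const_primitive (r * E x) x).
  { apply is_RInt_const_integrand; [exact hx | apply exp_pos]. }
  unfold const_primitive, gap. rewrite E_shift, Rpower_shift by assumption.
  assert (hE := exp_pos (c * Rpower x (1 - lam))). fold (E x) in hE.
  field. repeat split; lra.
Qed.

Hypothesis integral_converges :
  ex_RInt_gen (fun t => const_integrand (W lam c t) t)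
    (at_point 1) (Rbar_locally p_infty).

(* If W(x) >= r E(x) with r > 1 then, W being nondecreasing, the
   integrand dominates const_integrand (r E(x)) on [x, shift r x], so the
   integral over that interval is at least gap r: impossible for large x. *)
Lemma W_eventually_below r : 1 < r ->
  Rbar_locally p_infty (fun x => W lam c x < r * E x).
Proof.
  intros hr.
  destruct (ex_RInt_gen_tail_small _ _ integral_converges (gap r))
    as [M HM]; [apply gap_pos; lra|].
  exists (Rmax M 1). intros x hx. apply Rmax_Rlt in hx as [hxM hx1].
  destruct (Rlt_or_le (W lam c x) (r * E x)) as [|hW]; [assumption|exfalso].
  assert (hlnc : 0 < ln r / c).
  { apply Rdiv_lt_0_compat; [|lra]. rewrite <- ln_1. apply ln_increasing; lra. }
  assert (hcond : 0 < Rpower x (1 - lam) + ln r / c).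
  { assert (0 < Rpower x (1 - lam)) by apply exp_pos. lra. }
  assert (hxs : x < shift r x).
  { apply (Rpower_lt_reg _ _ (1 - lam)); [lra | apply exp_pos | lra |].
    rewrite Rpower_shift; lra. }
  destruct (HM x (shift r x)) as [I [HI hI]]; [lra | lra |].
  assert (hgap : gap r <= I).
  { apply (is_RInt_le _ _ x (shift r x) _ _ (Rlt_le _ _ hxs)
      (is_RInt_shift r x ltac:(lra) ltac:(lra) hcond) HI).
    intros t ht. apply const_integrand_le.
    apply (Rle_trans _ (W lam c x)); [exact hW | apply W_nondecreasing; lra]. }
  apply Rabs_def2 in hI. lra.
Qed.

(* If W(x) <= r E(x) with r < 1 then the integrand is at most
   const_integrand (r E(x)) on [shift r x, x], so the integral over that interval
   is at most - gap r; for x large, shift r x is large too: impossible. *)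
Lemma W_eventually_above r : 0 < r < 1 ->
  Rbar_locally p_infty (fun x => r * E x < W lam c x).
Proof.
  intros hr.
  destruct (ex_RInt_gen_tail_small _ _ integral_converges (gap r))
    as [M HM]; [apply gap_pos; lra|].
  set (M1 := Rmax M 1).
  assert (hM1 : M <= M1 /\ 1 <= M1) by (split; [apply Rmax_l | apply Rmax_r]).
  assert (hlnc : ln r / c < 0).
  { assert (ln r < 0) by (rewrite <- ln_1; apply ln_increasing; lra).
    assert (0 < / c) by (apply Rinv_0_lt_compat; lra). unfold Rdiv. nra. }
  assert (hM1p : 0 < Rpower M1 (1 - lam)) by apply exp_pos.
  exists (shift (/ r) M1). intros x hx.
  destruct (Rlt_or_le (r * E x) (W lam c x)) as [|hW]; [assumption|exfalso].
  assert (hN : Rpower (shift (/ r) M1) (1 - lam) = Rpower M1 (1 - lam) - ln r / c).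
  { rewrite Rpower_shift; rewrite ln_Rinv by lra; [field; lra | lra]. }
  assert (hxp : Rpower M1 (1 - lam) < Rpower x (1 - lam) + ln r / c).
  { assert (Rpower (shift (/ r) M1) (1 - lam) < Rpower x (1 - lam)); [|lra].
    apply Rlt_Rpower_l; [lra|]. split; [apply exp_pos | exact hx]. }
  assert (hcond : 0 < Rpower x (1 - lam) + ln r / c) by lra.
  assert (hx0 : 0 < x) by (apply (Rlt_trans _ (shift (/ r) M1)); [apply exp_pos | exact hx]).
  assert (hMs : M1 < shift r x).
  { apply (Rpower_lt_reg _ _ (1 - lam)); [lra | apply exp_pos | lra |].
    rewrite Rpower_shift; lra. }
  assert (hsx : shift r x < x).
  { apply (Rpower_lt_reg _ _ (1 - lam)); [apply exp_pos | lra | lra |].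
    rewrite Rpower_shift; lra. }
  destruct (HM x (shift r x)) as [I [HI hI]]; [lra | lra |].
  assert (hgap : - I <= - gap r).
  { apply is_RInt_swap in HI.
    pose proof (is_RInt_swap _ _ _ _ (is_RInt_shift r x ltac:(lra) hx0 hcond)) as Hshift.
    apply (is_RInt_le _ _ _ _ _ _ (Rlt_le _ _ hsx) HI Hshift).
    intros t ht. apply const_integrand_le.
    apply (Rle_trans _ (W lam c x)); [apply W_nondecreasing; lra | exact hW]. }
  apply Rabs_def2 in hI. lra.
Qed.

End Tauberian.

(* Main theorem: the convergence of the integral forces W(x) ~ exp(c x^(1-lam)). *)
Theorem mainTheorem8 (lam c : R) :
  0 < lam < 1 ->
  0 < c < 2 / (1 - lam) ->
  ex_RInt_gen
    (fun t => (W lam c t - exp (c * Rpower t (1 - lam)))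
              / (Rpower t lam * exp (c * Rpower t (1 - lam))))
    (at_point 1) (Rbar_locally p_infty) ->
  is_lim (fun x => W lam c x / exp (c * Rpower x (1 - lam))) p_infty 1.
Proof.
  intros hlam [hc _] Hint.
  apply (is_lim_ratio_1 _ (E lam c)); [intros; apply exp_pos|].
  intros e he. apply filter_and.
  - apply (W_eventually_above lam c hlam hc Hint). lra.
  - apply (W_eventually_below lam c hlam hc Hint). lra.
Qed.
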